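(* Let $G=(V,E)$ be a finite, undirected, connected graph with $V=\{1,\dots,N\}$ and neighbourhoods $N(i)$. Let $m_{ij}(t)\ge0$ ($t\ge0$, $j\in N(i)$) be the transition rates of a reference process whose marginal distribution $\tilde\rho(t)$ evolves by $\frac{d}{dt}\tilde\rho_i=\sum_{j\in N(i)}(m_{ji}\tilde\rho_j-m_{ij}\tilde\rho_i)$. Let $u$ be a convex function whose Legendre transform $u^*(x)=\sup_y\{xy-u(y)\}$ is continuously differentiable and satisfies $u^*(x)\le0$ for $x\le0$, $u^*(x)\ge0$ for $x\ge0$, $\frac{\partial u^*}{\partial x}(0)=1$, $\lim_{x\to-\infty}\big|\frac{\partial u^*}{\partial x}(x)\big|<\infty$ and $\lim_{x\to+\infty}\frac{\partial u^*}{\partial x}(x)=+\infty$. Assume that the marginal distribution $\tilde\rho(t)$ of the reference process is periodic in time with period $T>0$. Then there exist $\rho^0,\rho^1\in\mathcal P(G)$ such that the critical point of the general Schrödinger bridge problem with these marginals is a Hamiltonian process whose marginal distribution is periodic in time; namely, there is a solution $(\rho,\psi)$, $t\ge0$, of the critical point system $$\frac{\partial}{\partial t}\rho_i=\sum_{j\in N(i)}\Big(-\frac{\partial u^*}{\partial x}(\psi_j-\psi_i)m_{ij}\rho_i+\frac{\partial u^*}{\partial x}(\psi_i-\psi_j)m_{ji}\rho_j\Big),\qquad \frac{\partial}{\partial t}\psi_i=-\sum_{j\in N(i)}u^*(\psi_j-\psi_i)m_{ij},$$ with $\rho(0)=\rho^0$, $\rho(1)=\rho^1$, such that $\rho(t)$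 is periodic in $t$.
   Context: $\mathcal P(G)$ is the set of probability vectors on $V$. The general Schrödinger bridge problem is: minimize $\int_0^1\sum_{i\in V}\rho(i,t)\sum_{j\in N(i)}u\big(\hat m_{ij}^t/m_{ij}^t\big)m_{ij}^t\,dt$ over rates $\hat m^t_{ij}\ge0$, subject to $\frac{d}{dt}\rho(i,t)=\sum_{j\in N(i)}\big(\hat m^t_{ji}\rho_j-\hat m^t_{ij}\rho_i\big)$, $\rho(\cdot,0)=\rho^0$, $\rho(\cdot,1)=\rho^1$. Its critical point system displayed in the claim is Hamilton's equations $\partial_t\rho=\partial_\psi\mathcal H$, $\partial_t\psi=-\partial_\rho\mathcal H$ for $\mathcal H(\rho,\psi,t)=\sum_{i\in V}\sum_{j\in N(i)}u^*(\psi_j-\psi_i)m_{ij}(t)\rho_i$, and the associated process has transition rates $\hat m_{ij}=\frac{\partial u^*}{\partial x}(\psi_j-\psi_i)m_{ij}$. A process with these rates whose density and potential satisfy this system is the Hamiltonian process referred to. *)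

From Stdlib Require Import Reals List Relations.
From Coquelicot Require Import Coquelicot.
Open Scope R_scope.

(* Vertices are 0, ..., N-1 (the paper's 1, ..., N). A graph is given by a
   boolean adjacency relation adj; only its restriction to vertices matters. *)

Definition vsum (N : nat) (f : nat -> R) : R :=
  fold_right Rplus 0 (map f (seq 0 N)).

Definition nsum (N : nat) (adj : nat -> nat -> bool) (i : nat) (f : nat -> R) : R :=
  fold_right Rplus 0 (map f (filter (adj i) (seq 0 N))).

Definition undirected_graph (N : nat) (adj : nat -> nat -> bool) : Prop :=
  (forall i j, (i < N)%nat -> (j < N)%nat -> adj i j = adj j i) /\
  (forall i, (i < N)%nat -> adj i i = false).

Definition edge_rel (N : nat) (adj : nat -> nat -> bool) : relation nat :=
  fun a b => (a < N)%nat /\ (b < N)%nat /\ adj a b = true.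

Definition graph_connected (N : nat) (adj : nat -> nat -> bool) : Prop :=
  forall i j, (i < N)%nat -> (j < N)%nat -> clos_refl_trans nat (edge_rel N adj) i j.

Definition is_prob_vec (N : nat) (p : nat -> R) : Prop :=
  (forall i, (i < N)%nat -> 0 <= p i) /\ vsum N p = 1.

Definition convex_ext (u : R -> Rbar) : Prop :=
  forall x y a b l, 0 <= l <= 1 ->
    Rbar_le (u x) (Finite a) -> Rbar_le (u y) (Finite b) ->
    Rbar_le (u (l * x + (1 - l) * y)) (Finite (l * a + (1 - l) * b)).

Definition legendre (u : R -> Rbar) (x : R) : Rbar :=
  Lub_Rbar (fun z : R => exists y : R, Rbar_le (Finite z) (Rbar_minus (Finite (x * y)) (u y))).

(* its real value (meaningful when finite) *)
Definition ustar (u : R -> Rbar) (x : R) : R := real (legendre u x).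

(** The constant potential [psi = 0] already solves the critical point system:
    since the sign conditions force [ustar u 0 = 0] the potential stays constant, and since
    [Derive (ustar u) 0 = 1] the transport rates reduce to the reference rates [m], so
    [rho] may be taken to be the reference marginal itself, which is periodic
    by assumption. The boundary data are then [rho^0 = rhot 0] and
    [rho^1 = rhot 1]. *)
From Stdlib Require Import Reals List Relations Lra.
From Coquelicot Require Import Coquelicot.
Open Scope R_scope.

Lemma nsum_ext (N : nat) (adj : nat -> nat -> bool) (i : nat) (f g : nat -> R) :
  (forall j, f j = g j) -> nsum N adj i f = nsum N adj i g.
Proof. intros Hfg. unfold nsum. f_equal. now apply map_ext. Qed.

Lemma nsum_0 (N : nat) (adj : nat -> nat -> bool) (i : nat) :
  nsum N adj i (fun _ => 0) = 0.
Proof.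
unfold nsum. induction (filter (adj i) (seq 0 N)) as [|j l IH]; simpl.
- reflexivity.
- rewrite IH. ring.
Qed.

Lemma periodic_continuous_at_right_0 (f : R -> R) (T : R) :
  0 < T -> (forall t, 0 <= t -> f (t + T) = f t) -> continuous f T ->
  filterlim f (at_right 0) (locally (f 0)).
Proof.
intros HT Hper Hcont.
apply (filterlim_ext_loc (fun s => f (s + T))).
- exists (mkposreal 1 Rlt_0_1). intros s _ Hs. apply Hper. lra.
- rewrite <- (Hper 0) by lra.
  apply (filterlim_comp _ _ _ (fun s => s + T) f (at_right 0) (locally (0 + T))).
  + eapply filterlim_filter_le_1; [apply filter_le_within|].
    apply (continuous_plus (fun s : R => s) (fun _ : R => T) 0).
    * apply continuous_id.
    * apply continuous_const.
  + now rewrite Rplus_0_l.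
Qed.

Theorem mainTheorem5
  (N : nat) (adj : nat -> nat -> bool) (m : R -> nat -> nat -> R)
  (rhot : R -> nat -> R) (u : R -> Rbar) (T : R) :
  (0 < N)%nat ->
  undirected_graph N adj ->
  graph_connected N adj ->
  (* nonnegative transition rates of the reference process *)
  (forall t i j, 0 <= t -> (i < N)%nat -> (j < N)%nat -> adj i j = true -> 0 <= m t i j) ->
  (* rhot is the marginal distribution of the reference process *)
  (forall t, 0 <= t -> is_prob_vec N (rhot t)) ->
  (forall t i, 0 < t -> (i < N)%nat ->
     is_derive (fun s => rhot s i) t
       (nsum N adj i (fun j => m t j i * rhot t j - m t i j * rhot t i))) ->
  (* assumptions on u *)
  convex_ext u ->
  (forall x, is_finite (legendre u x)) ->
  (forall x, ex_derive (ustar u) x) ->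
  (forall x, continuous (Derive (ustar u)) x) ->
  (forall x, x <= 0 -> ustar u x <= 0) ->
  (forall x, 0 <= x -> 0 <= ustar u x) ->
  Derive (ustar u) 0 = 1 ->
  ex_finite_lim (fun x => Rabs (Derive (ustar u) x)) m_infty ->
  is_lim (Derive (ustar u)) p_infty p_infty ->
  (* periodicity of the reference marginal *)
  0 < T ->
  (forall t i, 0 <= t -> (i < N)%nat -> rhot (t + T) i = rhot t i) ->
  exists rho0 rho1 : nat -> R,
    is_prob_vec N rho0 /\ is_prob_vec N rho1 /\
    exists (rho psi : R -> nat -> R),
      (forall i, (i < N)%nat -> rho 0 i = rho0 i /\ rho 1 i = rho1 i) /\
      (forall i, (i < N)%nat ->
         filterlim (fun s => rho s i) (at_right 0) (locally (rho 0 i)) /\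
         filterlim (fun s => psi s i) (at_right 0) (locally (psi 0 i))) /\
      (forall t i, 0 < t -> (i < N)%nat ->
         is_derive (fun s => rho s i) t
           (nsum N adj i (fun j =>
              - Derive (ustar u) (psi t j - psi t i) * m t i j * rho t i
              + Derive (ustar u) (psi t i - psi t j) * m t j i * rho t j)) /\
         is_derive (fun s => psi s i) t
           (- nsum N adj i (fun j => ustar u (psi t j - psi t i) * m t i j))) /\
      (exists P, 0 < P /\ forall t i, 0 <= t -> (i < N)%nat -> rho (t + P) i = rho t i).
Proof.
intros _ _ _ _ Hprob Hder _ _ _ _ Hle Hge HD0 _ _ HT Hper.
assert (Hu0 : ustar u 0 = 0) by (apply Rle_antisym; [apply Hle | apply Hge]; lra).
exists (rhot 0), (rhot 1).
split; [apply Hprob; lra|]. split; [apply Hprob; lra|].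
exists rhot, (fun _ _ => 0).
split; [easy|].
split.
{ intros i Hi. split; [|apply filterlim_const].
  apply (periodic_continuous_at_right_0 (fun s => rhot s i) T);
    [exact HT | intros t Ht; now apply Hper|].
  apply (ex_derive_continuous (fun s : R => rhot s i)). eexists. apply Hder; [lra | exact Hi]. }
split.
{ intros t i Ht Hi. rewrite Rminus_0_r, HD0, Hu0. split.
  - erewrite nsum_ext; [now apply Hder|]. intros j; simpl. ring.
  - erewrite nsum_ext, nsum_0; [|intros j; simpl; ring].
    rewrite Ropp_0. apply is_derive_Reals, derivable_pt_lim_const. }
exists T. split; [exact HT | intros t i Ht Hi; now apply Hper].
Qed.
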